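(* Every $3$-fine curve is a circle.
   Context: For nonzero plane vectors $u,v$, $\angle(u,v)\in\mathbb{R}/2\pi\mathbb{Z}$ is the counterclockwise angle from $u$ to $v$. A framed $n$-gon is a tuple $(B_1,\dots,B_n;u_1,\dots,u_n)$ of points $B_i$ in the plane with $B_i\neq B_{i+1}$ and unit vectors $u_i$ satisfying $\angle(u_i,B_{i+1}-B_i)=\angle(B_{i+1}-B_i,u_{i+1})$ for all $i$ (indices mod $n$); $(u_i)$ and $(-u_i)$ are identified. An $n$-fine curve ($n\ge3$) is an oriented closed plane curve $\gamma$ with a one-parameter family of inscribed $n$-gons $B(t)=(B_1(t),\dots,B_n(t))$, $B_j(t)\in\gamma$, such that $(B_1(t),\dots,B_n(t);T_1(t),\dots,T_n(t))$ is a framed $n$-gon, where $T_j(t)$ is the positive unit tangent vector of $\gamma$ at $B_j(t)$, and: (1) each velocity $B_j'(t)$ points in the positive direction of $\gamma$ for all $t,j$; (2) $B_j(t+1)=B_{j+1}(t)$ for all $t,j$; (3) the tangent lines to $\gamma$ at $B_j(t)$ and $B_{j+1}(t)$ are not parallel for all $t,j$. Families are considered up to reparametrization. *)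

From Stdlib Require Import Reals Lra Lia.
From Coquelicot Require Import Coquelicot.
Open Scope R_scope.

Definition pt := (R * R)%type.

Definition vsub (p q : pt) : pt := (fst p - fst q, snd p - snd q).
Definition vscale (c : R) (p : pt) : pt := (c * fst p, c * snd p).
Definition vnorm (p : pt) : R := sqrt (fst p ^ 2 + snd p ^ 2).
Definition vdet (p q : pt) : R := fst p * snd q - snd p * fst q.

Definition rot (theta : R) (p : pt) : pt :=
  (cos theta * fst p - sin theta * snd p, sin theta * fst p + cos theta * snd p).

(* theta is a representative (in R) of the counterclockwise angle from u to v
   (u, v nonzero): the direction of v is the direction of u rotated by theta. *)
Definition ccw_angle_is (u v : pt) (theta : R) : Prop :=
  vscale (/ vnorm v) v = rot theta (vscale (/ vnorm u) u).

(* Equality in R/2piZ of angle(u,v) and angle(v',w): they have a common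
   real representative. *)
Definition angle_eq (u v v' w : pt) : Prop :=
  exists theta, ccw_angle_is u v theta /\ ccw_angle_is v' w theta.

Definition succ_mod (n j : nat) : nat := ((j + 1) mod n)%nat.

(* Framed n-gon (B_0,...,B_{n-1}; u_0,...,u_{n-1}), indices mod n.
   (The identification (u_i) ~ (-u_i) does not affect the defining
   condition, which is invariant under a global sign change.) *)
Definition framed_ngon (n : nat) (B u : nat -> pt) : Prop :=
  forall i, (i < n)%nat ->
    B i <> B (succ_mod n i) /\
    vnorm (u i) = 1 /\
    angle_eq (u i) (vsub (B (succ_mod n i)) (B i))
             (vsub (B (succ_mod n i)) (B i)) (u (succ_mod n i)).

(* A closed plane curve: a smooth, regular, periodic map gamma : R -> R^2.
   The orientation is that of increasing parameter. *)
Definition gx (g : R -> pt) : R -> R := fun s => fst (g s).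
Definition gy (g : R -> pt) : R -> R := fun s => snd (g s).

Definition velocity (g : R -> pt) (s : R) : pt :=
  (Derive (gx g) s, Derive (gy g) s).

Definition closed_regular_curve (g : R -> pt) : Prop :=
  (forall k s, ex_derive (Derive_n (gx g) k) s /\ ex_derive (Derive_n (gy g) k) s) /\
  (exists L, 0 < L /\ forall s, g (s + L) = g s) /\
  (forall s, velocity g s <> (0, 0)).

Definition unit_tangent (g : R -> pt) (s : R) : pt :=
  vscale (/ vnorm (velocity g s)) (velocity g s).

(* n-fine curve.  The inscribed polygon vertices are B_j(t) = g (sj j t),
   j = 0..n-1, with parameter functions sj j differentiable in t. *)
Definition fine_curve (n : nat) (g : R -> pt) : Prop :=
  (3 <= n)%nat /\ closed_regular_curve g /\
  exists sj : nat -> R -> R,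
    (* (1) velocity B_j'(t) = (sj j)'(t) * gamma'(sj j t) points in the positive direction *)
    (forall j t, (j < n)%nat -> ex_derive (sj j) t /\ 0 < Derive (sj j) t) /\
    (forall j t, (j < n)%nat -> g (sj j (t + 1)) = g (sj (succ_mod n j) t)) /\
    (forall t, framed_ngon n (fun j => g (sj j t)) (fun j => unit_tangent g (sj j t))) /\
    (forall j t, (j < n)%nat ->
       vdet (unit_tangent g (sj j t)) (unit_tangent g (sj (succ_mod n j) t)) <> 0).

Definition is_circle (g : R -> pt) : Prop :=
  exists (c : pt) (r : R), 0 < r /\
    forall p : pt, (exists s, g s = p) <-> vnorm (vsub p c) = r.

From Stdlib Require Import Reals Lra Lia Psatz Classical.
From Coquelicot Require Import Coquelicot.
Open Scope R_scope.

(* At each time t the three tangents at the vertices B_j(t) of the inscribed triangle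
   are tangent to one circle through the B_j(t).  Indeed, the framing condition says
   that each chord B_jB_{j+1} is orthogonal to T_j - T_{j+1}, i.e. symmetric with
   respect to the normals at its ends, and since three distinct unit vectors are never
   collinear, the normals at the three vertices meet in a point C(t) at the same signed
   distance from all of them.  As the vertices move along the tangents, orthogonally to
   C - B_j, differentiating |C - B_j|^2 (which does not depend on j) gives
   (B_j - B_0).C' = 0, so C' = 0 because the triangle is nondegenerate, and then the
   radius is constant as well.  Hence B_0(t) stays on a fixed circle; being 3-periodic,
   nonconstant and of nonvanishing velocity it sweeps the whole circle, and since its
   parameter s_0 is an increasing bijection of R it sweeps the whole curve. *)

(** * Plane vectors *)

Definition vadd (p q : pt) : pt := (fst p + fst q, snd p + snd q).

Definition vdot (p q : pt) : R := fst p * fst q + snd p * snd q.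

Definition vperp (p : pt) : pt := (- snd p, fst p).

Definition vdist2 (p q : pt) : R := vdot (vsub p q) (vsub p q).

Lemma pt_eq_of_coords (f : R -> pt) (a b : R) :
  gx f a = gx f b -> gy f a = gy f b -> f a = f b.
Proof.
  unfold gx, gy; intros Ex Ey.
  rewrite (surjective_pairing (f a)), (surjective_pairing (f b)), Ex, Ey; reflexivity.
Qed.

Lemma vnorm_gt0 (v : pt) : v <> (0, 0) -> 0 < vnorm v.
Proof.
  destruct v as [x y]; unfold vnorm; simpl; intro Hv; apply sqrt_lt_R0.
  destruct (Req_dec x 0), (Req_dec y 0); subst; [contradiction | nra ..].
Qed.

Lemma vdot_self_unit (v : pt) : vnorm v = 1 -> vdot v v = 1.
Proof.
  unfold vnorm, vdot; intro Hv.
  replace (fst v * fst v + snd v * snd v) with (fst v ^ 2 + snd v ^ 2) by ring.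
  rewrite <- (sqrt_sqrt (fst v ^ 2 + snd v ^ 2)) by nra; rewrite Hv; ring.
Qed.

Lemma vdot_self_ge0 (v : pt) : 0 <= vdot v v.
Proof. unfold vdot; apply Rplus_le_le_0_compat; apply Rle_0_sqr. Qed.

Lemma vdot_self_eq0 (v : pt) : vdot v v = 0 -> v = (0, 0).
Proof. destruct v as [x y]; unfold vdot; simpl; intro H; f_equal; nra. Qed.

Lemma vsub_eq0 (p q : pt) : vsub p q = (0, 0) -> p = q.
Proof.
  destruct p, q; unfold vsub; simpl; intro H; injection H; intros; f_equal; lra.
Qed.

Lemma vdist2_neq0 (p q : pt) : p <> q -> vdist2 p q <> 0.
Proof. intros Hpq E; apply Hpq, vsub_eq0, vdot_self_eq0, E. Qed.

Lemma vsub_vsub_r (p q : pt) : vsub p (vsub p q) = q.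
Proof. destruct p, q; unfold vsub; simpl; f_equal; ring. Qed.

Lemma vscale_neq0 (l : R) (v : pt) : l <> 0 -> v <> (0, 0) -> vscale l v <> (0, 0).
Proof.
  destruct v as [x y]; unfold vscale; simpl; intros Hl Hv E; injection E as Ex Ey; apply Hv.
  apply Rmult_integral in Ex as [Ex | ->]; [contradiction|].
  apply Rmult_integral in Ey as [Ey | ->]; [contradiction | reflexivity].
Qed.

Lemma vdet_neq0_neq (u w : pt) : vdet u w <> 0 -> u <> w.
Proof. intros Hd ->; apply Hd; unfold vdet; ring. Qed.

Lemma vdot_vscale_vperp (a : R) (u : pt) :
  vdot (vscale a (vperp u)) (vscale a (vperp u)) = a * a * vdot u u.
Proof. unfold vdot, vscale, vperp; simpl; ring. Qed.

Lemma vdot_vsub_vscale (w u v : pt) (l : R) :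
  vdot w (vsub u (vscale l v)) = vdot w u - l * vdot w v.
Proof. unfold vdot, vsub, vscale; simpl; ring. Qed.

Lemma vnorm_vsub (p q : pt) : vnorm (vsub p q) = sqrt (vdist2 p q).
Proof. unfold vnorm, vdist2, vdot; f_equal; ring. Qed.

Lemma vperp_of_vdot0 (w t : pt) :
  vdot t t <> 0 -> vdot w t = 0 -> w = vscale (vdet t w / vdot t t) (vperp t).
Proof.
  destruct w as [wx wy], t as [tx ty]; unfold vdot, vdet, vscale, vperp; simpl.
  intros Ht Hw; f_equal; field_simplify_eq; auto.
  - assert (tx * (wx * tx + wy * ty) = 0) by (rewrite Hw; ring); lra.
  - assert (ty * (wx * tx + wy * ty) = 0) by (rewrite Hw; ring); lra.
Qed.

Lemma vdot_eq0_of_vdet_neq0 (u w z : pt) :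
  vdet u w <> 0 -> vdot u z = 0 -> vdot w z = 0 -> z = (0, 0).
Proof.
  destruct u as [ux uy], w as [wx wy], z as [zx zy]; unfold vdet, vdot; simpl.
  intros Hd Hu Hw.
  assert (Ex : zx * (ux * wy - uy * wx) = 0).
  { transitivity ((ux * zx + uy * zy) * wy - (wx * zx + wy * zy) * uy); [ring|].
    rewrite Hu, Hw; ring. }
  assert (Ey : zy * (ux * wy - uy * wx) = 0).
  { transitivity ((wx * zx + wy * zy) * ux - (ux * zx + uy * zy) * wx); [ring|].
    rewrite Hu, Hw; ring. }
  apply Rmult_integral in Ex as [Ex | Ex]; [|contradiction].
  apply Rmult_integral in Ey as [Ey | Ey]; [|contradiction].
  subst; reflexivity.
Qed.

Lemma orthogonal_same_length_eq_or_opp (u w v : pt) :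
  v <> (0, 0) -> vdot u v = 0 -> vdot w v = 0 -> vdot u u = vdot w w ->
  w = u \/ w = vscale (-1) u.
Proof.
  intros Hv Hu Hw Huw.
  assert (Hvv : vdot v v <> 0) by (intro E; apply Hv, vdot_self_eq0, E).
  rewrite (vperp_of_vdot0 u v Hvv Hu), (vperp_of_vdot0 w v Hvv Hw) in *.
  set (a := vdet v u / vdot v v) in *; set (b := vdet v w / vdot v v) in *.
  clearbody a b; destruct v as [vx vy]; unfold vdot, vscale, vperp in *; simpl in *.
  assert (E : (b - a) * (b + a) * (vx * vx + vy * vy) = 0) by lra.
  apply Rmult_integral in E as [E | E]; [|contradiction].
  apply Rmult_integral in E as [E | E]; [left | right]; f_equal; nra.
Qed.

Lemma vdot_unit_tangent (g : R -> pt) (w : pt) (s : R) :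
  vdot w (unit_tangent g s) = / vnorm (velocity g s) * vdot w (velocity g s).
Proof. unfold unit_tangent, vscale, vdot; simpl; ring. Qed.

Lemma vdet_unit_tangent (g : R -> pt) (s s' : R) :
  vdet (unit_tangent g s) (unit_tangent g s') =
  / vnorm (velocity g s) * / vnorm (velocity g s') * vdet (velocity g s) (velocity g s').
Proof. unfold unit_tangent, vscale, vdet; simpl; ring. Qed.

(** * Framed triangles *)

Lemma angle_eq_chord_orthogonal (u c w : pt) :
  vnorm u = 1 -> vnorm w = 1 -> c <> (0, 0) -> angle_eq u c c w ->
  vdot c (vsub u w) = 0.
Proof.
  intros Hu Hw Hc [th [Huc Hcw]]; unfold ccw_angle_is in *.
  rewrite Hu, Rinv_1 in Huc; rewrite Hw, Rinv_1 in Hcw.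
  assert (Hk : / vnorm c <> 0) by (apply Rinv_neq_0_compat; apply Rgt_not_eq, vnorm_gt0, Hc).
  set (k := / vnorm c) in *; clearbody k.
  destruct u as [ux uy], c as [cx cy], w as [wx wy].
  unfold vscale, rot, vdot, vsub in *; simpl in *.
  injection Huc as Hucx Hucy; injection Hcw as Hcwx Hcwy.
  rewrite !Rmult_1_l in *.
  (* c' = R_th u and w = R_th c' for c' = c/|c|, so c'.u = cos th = w.c' *)
  assert (Hcs : cos th ^ 2 + sin th ^ 2 = 1) by (rewrite <- (sin2_cos2 th); unfold Rsqr; ring).
  apply (Rmult_eq_reg_l k); [|exact Hk].
  transitivity ((k*cx)*ux + (k*cy)*uy - ((k*cx)*wx + (k*cy)*wy)); [ring|].
  rewrite Hcwx, Hcwy, Hucx, Hucy.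
  transitivity (cos th * (ux^2 + uy^2) * (1 - (cos th ^ 2 + sin th ^ 2))); [ring|].
  rewrite Hcs; ring.
Qed.

Lemma unit_circle_noncollinear (t0 t1 t2 : pt) :
  vdot t0 t0 = 1 -> vdot t1 t1 = 1 -> vdot t2 t2 = 1 ->
  t0 <> t1 -> t1 <> t2 -> t2 <> t0 ->
  vdet (vsub t0 t2) (vsub t1 t2) <> 0.
Proof.
  destruct t0 as [x0 y0], t1 as [x1 y1], t2 as [x2 y2].
  unfold vdot, vdet, vsub; simpl; intros H0 H1 H2 N01 N12 N20 Hdet.
  set (ux := x0 - x2) in *; set (uy := y0 - y2) in *.
  set (wx := x1 - x2) in *; set (wy := y1 - y2) in *.
  assert (Hu : ux * ux + uy * uy <> 0).
  { intro E; apply N20; injection (vdot_self_eq0 (ux, uy) E); unfold ux, uy.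
    intros; f_equal; lra. }
  (* w = l u, and the points t2 + u, t2 + l u of the unit circle force l (l - 1) = 0 *)
  set (l := (ux * wx + uy * wy) / (ux * ux + uy * uy)).
  assert (Ewx : wx = l * ux).
  { unfold l; field_simplify_eq; auto.
    assert (uy * (ux * wy - uy * wx) = 0) by (rewrite Hdet; ring); lra. }
  assert (Ewy : wy = l * uy).
  { unfold l; field_simplify_eq; auto.
    assert (ux * (ux * wy - uy * wx) = 0) by (rewrite Hdet; ring); lra. }
  assert (Hl : l * (l - 1) * (ux * ux + uy * uy) = 0).
  { assert (Eu : 2 * (x2 * ux + y2 * uy) + (ux * ux + uy * uy) = 0) by (unfold ux, uy; nra).
    assert (Ew : 2 * (x2 * wx + y2 * wy) + (wx * wx + wy * wy) = 0) by (unfold wx, wy; nra).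
    rewrite Ewx, Ewy in Ew.
    transitivity (2 * (x2 * (l * ux) + y2 * (l * uy)) + ((l * ux) * (l * ux) + (l * uy) * (l * uy))
                  - l * (2 * (x2 * ux + y2 * uy) + (ux * ux + uy * uy))); [ring|].
    rewrite Ew, Eu; ring. }
  apply Rmult_integral in Hl as [Hl | Hl]; [|contradiction].
  apply Rmult_integral in Hl as [Hl | Hl].
  - apply N12; rewrite Hl in Ewx, Ewy; unfold wx, wy in *; f_equal; lra.
  - apply N01; assert (l = 1) by lra; subst l.
    rewrite H, Rmult_1_l in Ewx, Ewy; unfold wx, wy, ux, uy in *; f_equal; lra.
Qed.

Lemma framed_triangle_circumcenter (b0 b1 b2 t0 t1 t2 p : pt) :
  vdot t0 t0 = 1 -> vdot t1 t1 = 1 -> vdot t2 t2 = 1 ->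
  vdet t0 t1 <> 0 -> t1 <> t2 -> t2 <> t0 -> b0 <> b1 ->
  vdot (vsub b1 b0) (vsub t0 t1) = 0 ->
  vdot (vsub b2 b1) (vsub t1 t2) = 0 ->
  vdot (vsub b0 b2) (vsub t2 t0) = 0 ->
  vdot (vsub p b0) t0 = 0 -> vdot (vsub p b1) t1 = 0 ->
  exists a, a <> 0 /\ vsub p b0 = vscale a (vperp t0) /\
    vsub p b1 = vscale a (vperp t1) /\ vsub p b2 = vscale a (vperp t2).
Proof.
  intros U0 U1 U2 D01 N12 N20 Nb C01 C12 C20 P0 P1.
  assert (Hnc := unit_circle_noncollinear t0 t1 t2 U0 U1 U2 (vdet_neq0_neq _ _ D01) N12 N20).
  pose proof (vperp_of_vdot0 (vsub p b0) t0 ltac:(lra) P0) as E0.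
  pose proof (vperp_of_vdot0 (vsub p b1) t1 ltac:(lra) P1) as E1.
  pose proof (vperp_of_vdot0 _ _ (vdist2_neq0 _ _ N12) C12) as E12.
  pose proof (vperp_of_vdot0 _ _ (vdist2_neq0 _ _ N20) C20) as E20.
  set (a0 := vdet t0 (vsub p b0) / vdot t0 t0) in *.
  set (a1 := vdet t1 (vsub p b1) / vdot t1 t1) in *.
  set (r1 := vdet (vsub t1 t2) (vsub b2 b1) / _) in *.
  set (r2 := vdet (vsub t2 t0) (vsub b0 b2) / _) in *.
  clearbody a0 a1 r1 r2.
  destruct b0 as [b0x b0y], b1 as [b1x b1y], b2 as [b2x b2y], p as [px py],
    t0 as [x0 y0], t1 as [x1 y1], t2 as [x2 y2].
  unfold vdot, vdet, vsub, vscale, vperp in *; simpl in *.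
  injection E0 as E0x E0y; injection E1 as E1x E1y.
  injection E12 as E12x E12y; injection E20 as E20x E20y.
  assert (b0x = px + a0 * y0) by lra; assert (b0y = py - a0 * x0) by lra.
  assert (b1x = px + a1 * y1) by lra; assert (b1y = py - a1 * x1) by lra.
  assert (b2x = b1x - r1 * (y1 - y2)) by lra; assert (b2y = b1y + r1 * (x1 - x2)) by lra.
  subst b2x b2y; subst b0x b0y b1x b1y.
  assert (Ha : a1 = a0).
  { (* (b1 - b0).(t0 - t1) = (a1 - a0) det(t0, t1) *)
    assert (E : (a1 - a0) * (x0 * y1 - y0 * x1) = 0) by lra.
    apply Rmult_integral in E as [E | E]; [lra | contradiction]. }
  subst a1.
  (* the three chords close up: (a0 - r2) (t0 - t2) + (r1 - a0) (t1 - t2) = 0 *)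
  assert (Hr := vdot_eq0_of_vdet_neq0 (x0 - x2, x1 - x2) (y0 - y2, y1 - y2) (a0 - r2, r1 - a0)
                  ltac:(unfold vdet; simpl; lra) ltac:(unfold vdot; simpl; lra)
                  ltac:(unfold vdot; simpl; lra)).
  injection Hr as Hr2 Hr1; assert (r1 = a0) by lra.
  subst r1; exists a0; repeat split; try (f_equal; ring).
  intro Ha0; apply Nb; subst a0; f_equal; ring.
Qed.

(** * Calculus of plane curves *)

Definition is_vderive (p : R -> pt) (t : R) (v : pt) : Prop :=
  is_derive (gx p) t (fst v) /\ is_derive (gy p) t (snd v).

Lemma is_derive_0_const (f : R -> R) : (forall t, is_derive f t 0) -> forall a b, f a = f b.
Proof.
  intros Hd a b; destruct (Rtotal_order a b) as [Hab | [-> | Hab]]; [| reflexivity |].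
  - apply (eq_is_derive f a b); auto.
  - symmetry; apply (eq_is_derive f b a); auto.
Qed.

Lemma is_vderive_0_const (p : R -> pt) : (forall t, is_vderive p t (0, 0)) -> forall a b, p a = p b.
Proof.
  intros Hd a b; apply pt_eq_of_coords; apply is_derive_0_const; intro t; apply Hd.
Qed.

Lemma is_vderive_comp (p : R -> pt) (s : R -> R) (t ds : R) :
  ex_derive (gx p) (s t) -> ex_derive (gy p) (s t) -> is_derive s t ds ->
  is_vderive (fun u => p (s u)) t (vscale ds (Derive (gx p) (s t), Derive (gy p) (s t))).
Proof.
  intros Hx Hy Hs; split.
  - exact (is_derive_comp (gx p) s t _ _ (Derive_correct _ _ Hx) Hs).
  - exact (is_derive_comp (gy p) s t _ _ (Derive_correct _ _ Hy) Hs).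
Qed.

Lemma is_vderive_dist2 (p q : R -> pt) (t : R) (dp dq : pt) :
  is_vderive p t dp -> is_vderive q t dq ->
  is_derive (fun u => vdist2 (p u) (q u)) t (2 * vdot (vsub (p t) (q t)) (vsub dp dq)).
Proof.
  intros [Hpx Hpy] [Hqx Hqy].
  apply (is_derive_ext (fun u => (gx p u - gx q u) ^ 2 + (gy p u - gy q u) ^ 2));
    [intro u; unfold vdist2, vdot, vsub, gx, gy; simpl; ring|].
  auto_derive; [repeat split; eexists; eassumption|].
  replace (Derive (fun x : R => gx p x) t) with (fst dp) by (symmetry; apply is_derive_unique, Hpx).
  replace (Derive (fun x : R => gx q x) t) with (fst dq) by (symmetry; apply is_derive_unique, Hqx).
  replace (Derive (fun x : R => gy p x) t) with (snd dp) by (symmetry; apply is_derive_unique, Hpy).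
  replace (Derive (fun x : R => gy q x) t) with (snd dq) by (symmetry; apply is_derive_unique, Hqy).
  unfold vdot, vsub, gx, gy; simpl; ring.
Qed.

Lemma continuity_of_ex_derive (f : R -> R) : (forall s, ex_derive f s) -> continuity f.
Proof. intros Hf s; apply continuity_pt_filterlim, (ex_derive_continuous f), Hf. Qed.

Lemma periodic_max_critical (phi dphi : R -> R) (T : R) :
  0 < T -> (forall t, is_derive phi t (dphi t)) -> (forall t, phi (t + T) = phi t) ->
  exists M, dphi M = 0 /\ forall t, 0 <= t <= T -> phi t <= phi M.
Proof.
  intros HT Hd Hper.
  destruct (continuity_ab_maj phi 0 T) as [M [HM HMT]]; [lra | |].
  { intros t _; apply continuity_pt_filterlim, (ex_derive_continuous phi t).
    eexists; apply Hd. }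
  exists M; split; [|exact HM].
  assert (Hloc : forall x, M - T < x -> x < M + T -> phi x <= phi M).
  { intros x Hlo Hhi; destruct (Rle_dec 0 x), (Rle_dec x T).
    - apply HM; lra.
    - replace x with (x - T + T) by ring; rewrite Hper; apply HM; lra.
    - rewrite <- Hper; apply HM; lra.
    - lra. }
  pose proof (proj1 (is_derive_Reals _ _ _) (Hd M)) as HdM.
  exact (deriv_maximum phi (M - T) (M + T) M (exist _ _ HdM) ltac:(lra) ltac:(lra) Hloc).
Qed.

Lemma continuous_limit_of_constant (c : R -> R) (u : nat -> R) (l v : R) :
  continuity c -> Un_cv u l -> (forall n, c (u n) = v) -> v = c l.
Proof.
  intros Hc Hu Hv; apply (UL_sequence (fun n => c (u n))).
  - intros e He; exists 0%nat; intros n _.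
    unfold R_dist; rewrite Hv, Rminus_diag, Rabs_R0; exact He.
  - apply continuity_seq; auto.
Qed.

Lemma increasing_bounded_above_periodic_const (h : R -> R) (f : R -> pt) (T M : R) :
  0 < T -> (forall x y, x < y -> h x < h y) ->
  continuity (gx f) -> continuity (gy f) ->
  (forall t, f (h (t + T)) = f (h t)) -> (forall t, h t <= M) ->
  forall x, 0 <= x <= T -> f (h x) = f (h 0).
Proof.
  intros HT Hinc Cx Cy Hper Hub x Hx.
  assert (Hle : forall a b, a <= b -> h a <= h b).
  { intros a b [Hab | ->]; [left; apply Hinc, Hab | right; reflexivity]. }
  set (orbit := fun y n => h (INR n * T + y)).
  assert (Hcv : forall y, {l | Un_cv (orbit y) l}).
  { intro y; apply growing_cv.
    - intro n; unfold orbit; rewrite S_INR; apply Hle; nra.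
    - exists M; intros z [n ->]; apply Hub. }
  assert (Hval : forall y n, f (orbit y n) = f (h y)).
  { intros y n; unfold orbit; induction n as [|n IH].
    - simpl; rewrite Rmult_0_l, Rplus_0_l; reflexivity.
    - rewrite S_INR; replace ((INR n + 1) * T + y) with (INR n * T + y + T) by ring.
      rewrite Hper; exact IH. }
  destruct (Hcv 0) as [l0 Hl0], (Hcv x) as [lx Hlx].
  (* orbit 0 n <= orbit x n <= orbit 0 (n + 1): both orbits have the same limit *)
  assert (Hl : lx = l0).
  { apply Rle_antisym.
    - apply (Rle_cv_lim (Un := orbit x) (Vn := fun n => orbit 0 (n + 1)%nat));
        [|exact Hlx | apply CV_shift', Hl0].
      intro n; unfold orbit; rewrite plus_INR; simpl INR; apply Hle; nra.
    - apply (Rle_cv_lim (Un := orbit 0) (Vn := orbit x)); [|exact Hl0|exact Hlx].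
      intro n; unfold orbit; apply Hle; lra. }
  subst lx.
  assert (Hlim : forall y, Un_cv (orbit y) l0 -> gx f (h y) = gx f l0 /\ gy f (h y) = gy f l0).
  { intros y Hy; split.
    - apply (continuous_limit_of_constant (gx f) (orbit y) l0 (gx f (h y))); auto.
      intro n; unfold gx; rewrite Hval; reflexivity.
    - apply (continuous_limit_of_constant (gy f) (orbit y) l0 (gy f (h y))); auto.
      intro n; unfold gy; rewrite Hval; reflexivity. }
  destruct (Hlim x Hlx) as [Ex Ey], (Hlim 0 Hl0) as [E0x E0y].
  apply pt_eq_of_coords; congruence.
Qed.

Lemma continuity_opp_comp (c : R -> R) : continuity c -> continuity (fun y => c (- y)).
Proof.
  intros Hc; apply (continuity_comp Ropp c); [|exact Hc].
  intro x; apply continuity_pt_opp, derivable_continuous_pt, derivable_pt_id.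
Qed.

Lemma increasing_periodic_surjective (h : R -> R) (f : R -> pt) (T x0 : R) :
  0 < T -> 0 <= x0 <= T -> continuity h -> (forall x y, x < y -> h x < h y) ->
  continuity (gx f) -> continuity (gy f) -> (forall t, f (h (t + T)) = f (h t)) ->
  f (h x0) <> f (h 0) -> forall s, exists t, h t = s.
Proof.
  intros HT Hx0 Ch Hinc Cx Cy Hper Hnc s.
  assert (Habove : exists t, s <= h t).
  { apply NNPP; intro Hno; apply Hnc.
    apply (increasing_bounded_above_periodic_const h f T s); auto.
    intro t; apply Rnot_lt_le; intro Hlt; apply Hno; exists t; lra. }
  (* reflecting through the origin turns a lower bound into an upper bound *)
  assert (Hbelow : exists t, h t <= s).
  { apply NNPP; intro Hno; apply Hnc.
    assert (E := increasing_bounded_above_periodic_const (fun y => - h (- y)) (fun y => f (- y))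
                   T (- s) HT).
    cbv beta in E; rewrite Ropp_0, !Ropp_involutive in E.
    rewrite <- E with (x := T - x0).
    - rewrite Ropp_involutive, <- (Hper (- (T - x0))); do 2 f_equal; ring.
    - intros x y Hxy; apply Ropp_lt_contravar, Hinc; lra.
    - apply (continuity_opp_comp (gx f)), Cx.
    - apply (continuity_opp_comp (gy f)), Cy.
    - intro t; rewrite !Ropp_involutive, <- (Hper (- (t + T))); do 2 f_equal; ring.
    - intro t; apply Ropp_le_contravar, Rnot_lt_le; intro Hlt; apply Hno; exists (- t); lra.
    - lra. }
  destruct Habove as [t1 H1], Hbelow as [t2 H2].
  destruct (IVT_gen h t2 t1 s Ch) as [t [_ Ht]]; [|exists t; exact Ht].
  split; [apply Rle_trans with (h t2); [apply Rmin_l | exact H2]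
         | apply Rle_trans with (h t1); [exact H1 | apply Rmax_r]].
Qed.

Lemma tangential_curve_covers_circle (b v : R -> pt) (c q : pt) (r2 T x0 : R) :
  0 < T -> 0 <= x0 <= T ->
  (forall t, is_vderive b t (v t)) ->
  (forall t, v t <> (0, 0)) ->
  (forall t, vdot (vsub (b t) c) (v t) = 0) ->
  (forall t, vdist2 (b t) c = r2) ->
  (forall t, b (t + T) = b t) -> b x0 <> b 0 ->
  vdist2 q c = r2 -> exists t, b t = q.
Proof.
  intros HT Hx0 Db Hv Hort Hrad Hper Hnc Hq.
  set (phi := fun t => vdot (vsub (b t) c) (vsub q c)).
  destruct (periodic_max_critical phi (fun t => vdot (v t) (vsub q c)) T HT)
    as [M [HdM HM]].
  { intro t; destruct (Db t) as [Dx Dy].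
    apply (is_derive_ext
             (fun t => (gx b t - fst c) * (fst q - fst c) + (gy b t - snd c) * (snd q - snd c)));
      [reflexivity|].
    auto_derive; [repeat split; eexists; eassumption|].
    replace (Derive (fun x : R => gx b x) t) with (fst (v t))
      by (symmetry; apply is_derive_unique, Dx).
    replace (Derive (fun x : R => gy b x) t) with (snd (v t))
      by (symmetry; apply is_derive_unique, Dy).
    unfold vdot, vsub; simpl; ring. }
  { intro t; unfold phi; rewrite Hper; reflexivity. }
  assert (Hqv : vdot (vsub q c) (v M) = 0) by (rewrite <- HdM; unfold vdot; ring).
  destruct (orthogonal_same_length_eq_or_opp (vsub (b M) c) (vsub q c) (v M) (Hv M) (Hort M) Hqv
              ltac:(change (vdist2 (b M) c = vdist2 q c); rewrite Hrad, Hq; reflexivity))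
    as [E | E].
  - exists M; revert E; destruct (b M), q, c; unfold vsub; simpl.
    intro E; injection E; intros; f_equal; lra.
  - exfalso; apply Hnc.
    (* phi M = - r2 is the maximum, so |(b t - c) + (q - c)|^2 = 2 r2 + 2 phi t <= 0 *)
    assert (Hanti : forall t, 0 <= t <= T -> b t = vsub c (vsub q c)).
    { intros t Ht; assert (Hle := HM t Ht).
      assert (HphiM : phi M = - r2).
      { unfold phi; rewrite E, <- (Hrad M); unfold vdist2, vdot, vscale; simpl; ring. }
      assert (Hd : vdot (vadd (vsub (b t) c) (vsub q c)) (vadd (vsub (b t) c) (vsub q c)) = 0).
      { apply Rle_antisym; [|apply vdot_self_ge0].
        replace (vdot _ _) with (vdist2 (b t) c + 2 * phi t + vdist2 q c)
          by (unfold phi, vdist2, vdot, vadd; simpl; ring).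
        rewrite Hrad, Hq; lra. }
      apply vdot_self_eq0 in Hd; revert Hd; destruct (b t), c, q; unfold vadd, vsub; simpl.
      intro Hd; injection Hd; intros; f_equal; lra. }
    rewrite (Hanti x0 Hx0), (Hanti 0); [reflexivity | lra].
Qed.

(** * Three-fine curves *)

Section ThreeFineCurve.

Variable g : R -> pt.
Hypothesis g_derivable : forall s, ex_derive (gx g) s /\ ex_derive (gy g) s.
Hypothesis velocity_derivable :
  forall s, ex_derive (Derive (gx g)) s /\ ex_derive (Derive (gy g)) s.
Hypothesis g_regular : forall s, velocity g s <> (0, 0).

Variable sj : nat -> R -> R.
Hypothesis sj_increasing :
  forall j t, (j < 3)%nat -> ex_derive (sj j) t /\ 0 < Derive (sj j) t.
Hypothesis sj_shift : forall j t, (j < 3)%nat -> g (sj j (t + 1)) = g (sj (succ_mod 3 j) t).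
Hypothesis sj_framed :
  forall t, framed_ngon 3 (fun j => g (sj j t)) (fun j => unit_tangent g (sj j t)).
Hypothesis sj_transversal : forall j t, (j < 3)%nat ->
  vdet (unit_tangent g (sj j t)) (unit_tangent g (sj (succ_mod 3 j) t)) <> 0.

Let vertex j t := g (sj j t).
Let vel j t := velocity g (sj j t).
Let tangent j t := unit_tangent g (sj j t).

(* The intersection of the normals to the curve at B_0(t) and B_1(t). *)
Definition circumcenter (t : R) : pt :=
  vadd (vertex 0 t)
    (vscale (vdot (vsub (vertex 1 t) (vertex 0 t)) (vel 1 t) / vdet (vel 0 t) (vel 1 t))
       (vperp (vel 0 t))).

Definition circumradius2 (t : R) : R := vdist2 (circumcenter t) (vertex 0 t).

Lemma vertex_neq j t : (j < 3)%nat -> vertex j t <> vertex (succ_mod 3 j) t.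
Proof. intro Hj; apply (sj_framed t j Hj). Qed.

Lemma tangent_unit j t : (j < 3)%nat -> vdot (tangent j t) (tangent j t) = 1.
Proof. intro Hj; apply vdot_self_unit, (sj_framed t j Hj). Qed.

Lemma chord_orthogonal j t : (j < 3)%nat ->
  vdot (vsub (vertex (succ_mod 3 j) t) (vertex j t))
       (vsub (tangent j t) (tangent (succ_mod 3 j) t)) = 0.
Proof.
  intro Hj; destruct (sj_framed t j Hj) as [Hneq [Hu Ha]].
  apply angle_eq_chord_orthogonal; auto.
  - assert (Hs : (succ_mod 3 j < 3)%nat) by (unfold succ_mod; apply Nat.mod_upper_bound; lia).
    apply (sj_framed t _ Hs).
  - intro E; apply Hneq; symmetry; apply vsub_eq0, E.
Qed.

Lemma vel_vdet_neq0 t : vdet (vel 0 t) (vel 1 t) <> 0.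
Proof.
  intro E; apply (sj_transversal 0 t ltac:(lia)).
  rewrite vdet_unit_tangent; change (succ_mod 3 0) with 1%nat; unfold vel in E; rewrite E; ring.
Qed.

Lemma circumcenter_sub_vertex t : exists a, a <> 0 /\
  forall j, (j < 3)%nat -> vsub (circumcenter t) (vertex j t) = vscale a (vperp (tangent j t)).
Proof.
  assert (P0 : vdot (vsub (circumcenter t) (vertex 0 t)) (tangent 0 t) = 0).
  { unfold tangent; rewrite vdot_unit_tangent.
    unfold circumcenter, vadd, vsub, vscale, vperp, vdot; simpl; ring. }
  assert (P1 : vdot (vsub (circumcenter t) (vertex 1 t)) (tangent 1 t) = 0).
  { unfold tangent; rewrite vdot_unit_tangent.
    replace (vdot (vsub (circumcenter t) (vertex 1 t)) (velocity g (sj 1 t))) with 0; [ring|].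
    assert (Hd := vel_vdet_neq0 t).
    unfold circumcenter, vadd, vsub, vscale, vperp, vdot, vdet in *; simpl.
    field; exact Hd. }
  destruct (framed_triangle_circumcenter (vertex 0 t) (vertex 1 t) (vertex 2 t)
              (tangent 0 t) (tangent 1 t) (tangent 2 t) (circumcenter t)
              (tangent_unit 0 t ltac:(lia)) (tangent_unit 1 t ltac:(lia))
              (tangent_unit 2 t ltac:(lia))
              (sj_transversal 0 t ltac:(lia))
              (vdet_neq0_neq _ _ (sj_transversal 1 t ltac:(lia)))
              (vdet_neq0_neq _ _ (sj_transversal 2 t ltac:(lia)))
              (vertex_neq 0 t ltac:(lia))
              (chord_orthogonal 0 t ltac:(lia)) (chord_orthogonal 1 t ltac:(lia))
              (chord_orthogonal 2 t ltac:(lia)) P0 P1) as [a [Ha [E0 [E1 E2]]]].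
  exists a; split; [exact Ha|].
  intros j Hj; destruct j as [|[|[|j]]]; auto; lia.
Qed.

Lemma circumcenter_normal j t : (j < 3)%nat ->
  vdot (vsub (circumcenter t) (vertex j t)) (vel j t) = 0.
Proof.
  intro Hj; destruct (circumcenter_sub_vertex t) as [a [_ Ha]]; rewrite (Ha j Hj).
  unfold tangent, unit_tangent, vdot, vscale, vperp; simpl; ring.
Qed.

Lemma circumcenter_equidistant j t : (j < 3)%nat ->
  vdist2 (circumcenter t) (vertex j t) = circumradius2 t.
Proof.
  intro Hj; destruct (circumcenter_sub_vertex t) as [a [_ Ha]]; unfold circumradius2, vdist2.
  rewrite (Ha j Hj), (Ha 0%nat ltac:(lia)), !vdot_vscale_vperp, tangent_unit, tangent_unit;
    auto; lia.
Qed.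

Lemma circumradius2_pos t : 0 < circumradius2 t.
Proof.
  destruct (circumcenter_sub_vertex t) as [a [Ha0 Ha]]; unfold circumradius2, vdist2.
  rewrite (Ha 0%nat ltac:(lia)), vdot_vscale_vperp, tangent_unit by lia.
  rewrite Rmult_1_r; apply Rsqr_pos_lt, Ha0.
Qed.

Lemma triangle_nondegenerate t :
  vdet (vsub (vertex 1 t) (vertex 0 t)) (vsub (vertex 2 t) (vertex 0 t)) <> 0.
Proof.
  destruct (circumcenter_sub_vertex t) as [a [Ha0 Ha]].
  assert (Hv : forall j, (j < 3)%nat ->
            vertex j t = vsub (circumcenter t) (vscale a (vperp (tangent j t)))).
  { intros j Hj; rewrite <- (Ha j Hj), vsub_vsub_r; reflexivity. }
  rewrite (Hv 0%nat), (Hv 1%nat), (Hv 2%nat) by lia.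
  replace (vdet _ _)
    with (a * a * vdet (vsub (tangent 1 t) (tangent 0 t)) (vsub (tangent 2 t) (tangent 0 t)))
    by (unfold vdet, vsub, vscale, vperp; simpl; ring).
  apply Rmult_integral_contrapositive; split; [apply Rmult_integral_contrapositive; auto|].
  apply unit_circle_noncollinear; try (apply tangent_unit; lia).
  - apply vdet_neq0_neq, (sj_transversal 1 t); lia.
  - apply vdet_neq0_neq, (sj_transversal 2 t); lia.
  - apply vdet_neq0_neq, (sj_transversal 0 t); lia.
Qed.

Lemma vertex_vderive j t : (j < 3)%nat ->
  is_vderive (vertex j) t (vscale (Derive (sj j) t) (vel j t)).
Proof.
  intro Hj; apply is_vderive_comp; try apply g_derivable.
  apply Derive_correct, (sj_increasing j t Hj).
Qed.

Lemma circumcenter_derivable t : ex_derive (gx circumcenter) t /\ ex_derive (gy circumcenter) t.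
Proof.
  assert (Dgx : forall s, ex_derive (fun x => gx g x) s) by apply g_derivable.
  assert (Dgy : forall s, ex_derive (fun x => gy g x) s) by apply g_derivable.
  assert (Dvx : forall s, ex_derive (fun x => Derive (gx g) x) s) by apply velocity_derivable.
  assert (Dvy : forall s, ex_derive (fun x => Derive (gy g) x) s) by apply velocity_derivable.
  assert (Ds0 : ex_derive (fun x => sj 0 x) t) by (apply sj_increasing; lia).
  assert (Ds1 : ex_derive (fun x => sj 1 x) t) by (apply sj_increasing; lia).
  (* the coefficient of [circumcenter] in coordinates, so that [auto_derive] sees
     compositions of [gx g], [gy g], [Derive (gx g)], [Derive (gy g)] with [sj] *)
  set (k := fun t => ((gx g (sj 1 t) - gx g (sj 0 t)) * Derive (gx g) (sj 1 t)
                      + (gy g (sj 1 t) - gy g (sj 0 t)) * Derive (gy g) (sj 1 t))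
             / (Derive (gx g) (sj 0 t) * Derive (gy g) (sj 1 t)
                - Derive (gy g) (sj 0 t) * Derive (gx g) (sj 1 t))).
  assert (Hk : ex_derive k t).
  { unfold k; auto_derive; repeat split; auto.
    intro E; apply (vel_vdet_neq0 t); unfold vdet, vel, velocity; simpl; lra. }
  split.
  - apply (ex_derive_ext (fun t => gx g (sj 0 t) + k t * - Derive (gy g) (sj 0 t))); [reflexivity|].
    auto_derive; repeat split; auto.
  - apply (ex_derive_ext (fun t => gy g (sj 0 t) + k t * Derive (gx g) (sj 0 t))); [reflexivity|].
    auto_derive; repeat split; auto.
Qed.

Lemma circumcenter_stationary t : is_vderive circumcenter t (0, 0).
Proof.
  destruct (circumcenter_derivable t) as [Hx Hy].
  set (dc := (Derive (gx circumcenter) t, Derive (gy circumcenter) t)).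
  assert (Hc : is_vderive circumcenter t dc) by (split; apply Derive_correct; assumption).
  (* the vertices move along the tangents, i.e. orthogonally to the radii *)
  assert (Hrate : forall j, (j < 3)%nat ->
            is_derive circumradius2 t (2 * vdot (vsub (circumcenter t) (vertex j t)) dc)).
  { intros j Hj.
    apply (is_derive_ext (fun u => vdist2 (circumcenter u) (vertex j u)));
      [intro u; apply circumcenter_equidistant, Hj|].
    replace (2 * vdot _ dc) with (2 * vdot (vsub (circumcenter t) (vertex j t))
                                       (vsub dc (vscale (Derive (sj j) t) (vel j t)))).
    - apply is_vderive_dist2; [exact Hc | apply vertex_vderive, Hj].
    - rewrite vdot_vsub_vscale, (circumcenter_normal j t Hj); ring. }
  assert (E1 := is_derive_unique _ _ _ (Hrate 1%nat ltac:(lia))).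
  assert (E2 := is_derive_unique _ _ _ (Hrate 2%nat ltac:(lia))).
  rewrite (is_derive_unique _ _ _ (Hrate 0%nat ltac:(lia))) in E1, E2.
  replace (0, 0) with dc; [exact Hc|].
  apply (vdot_eq0_of_vdet_neq0 _ _ _ (triangle_nondegenerate t));
    unfold vdot, vsub in *; simpl in *; lra.
Qed.

Lemma circumradius2_stationary t : is_derive circumradius2 t 0.
Proof.
  replace 0 with (2 * vdot (vsub (circumcenter t) (vertex 0 t))
                          (vsub (0, 0) (vscale (Derive (sj 0) t) (vel 0 t)))).
  - apply is_vderive_dist2; [apply circumcenter_stationary | apply vertex_vderive; lia].
  - rewrite vdot_vsub_vscale, (circumcenter_normal 0 t ltac:(lia)).
    unfold vdot, vsub; simpl; ring.
Qed.

Lemma vertex0_periodic t : vertex 0 (t + 3) = vertex 0 t.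
Proof.
  replace (t + 3) with (t + 1 + 1 + 1) by ring.
  exact (eq_trans (sj_shift 0 _ ltac:(lia))
           (eq_trans (sj_shift 1 _ ltac:(lia)) (sj_shift 2 t ltac:(lia)))).
Qed.

Lemma vertex0_nonconstant : vertex 0 1 <> vertex 0 0.
Proof.
  replace 1 with (0 + 1) by ring; unfold vertex; rewrite (sj_shift 0 0) by lia.
  apply not_eq_sym, (vertex_neq 0 0); lia.
Qed.

Lemma sj0_increasing x y : x < y -> sj 0 x < sj 0 y.
Proof.
  intro Hxy; apply (incr_function (sj 0) m_infty p_infty (Derive (sj 0))); try easy.
  - intros z _ _; apply Derive_correct, sj_increasing; lia.
  - intros z _ _; apply sj_increasing; lia.
Qed.

Lemma sj0_surjective s : exists t, sj 0 t = s.
Proof.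
  apply (increasing_periodic_surjective (sj 0) g 3 1); try lra.
  - apply continuity_of_ex_derive; intro u; apply sj_increasing; lia.
  - exact sj0_increasing.
  - apply continuity_of_ex_derive; apply g_derivable.
  - apply continuity_of_ex_derive; apply g_derivable.
  - exact vertex0_periodic.
  - exact vertex0_nonconstant.
Qed.

Lemma vertex0_on_circle t :
  vdist2 (vertex 0 t) (circumcenter 0) = circumradius2 0 /\
  vdot (vsub (vertex 0 t) (circumcenter 0)) (vscale (Derive (sj 0) t) (vel 0 t)) = 0.
Proof.
  rewrite <- (is_vderive_0_const _ circumcenter_stationary t 0),
          <- (is_derive_0_const _ circumradius2_stationary t 0).
  split; [unfold circumradius2, vdist2, vdot, vsub; simpl; ring|].
  transitivity (- Derive (sj 0) t * vdot (vsub (circumcenter t) (vertex 0 t)) (vel 0 t));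
    [unfold vdot, vsub, vscale; simpl; ring | rewrite circumcenter_normal by lia; ring].
Qed.

Theorem three_fine_curve_is_circle : is_circle g.
Proof.
  exists (circumcenter 0), (sqrt (circumradius2 0)); split; [apply sqrt_lt_R0, circumradius2_pos|].
  intro p; rewrite vnorm_vsub; split.
  - intros [s <-]; destruct (sj0_surjective s) as [t <-].
    rewrite <- (proj1 (vertex0_on_circle t)); reflexivity.
  - intro Hp; apply sqrt_inj in Hp; [| apply vdot_self_ge0 | apply Rlt_le, circumradius2_pos].
    destruct (tangential_curve_covers_circle (vertex 0)
                (fun t => vscale (Derive (sj 0) t) (vel 0 t))
                (circumcenter 0) p (circumradius2 0) 3 1) as [t Ht]; try (assumption || lra).
    + intro t; apply vertex_vderive; lia.
    + intro t; apply vscale_neq0; [apply Rgt_not_eq, sj_increasing; lia | apply g_regular].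
    + intro t; apply vertex0_on_circle.
    + intro t; apply vertex0_on_circle.
    + exact vertex0_periodic.
    + exact vertex0_nonconstant.
    + exists (sj 0 t); exact Ht.
Qed.

End ThreeFineCurve.

Theorem proposition6p1 : forall g : R -> pt, fine_curve 3 g -> is_circle g.
Proof.
  intros g [_ [[Hsmooth [_ Hregular]] [sj [Hsj [Hshift [Hframed Htransversal]]]]]].
  exact (three_fine_curve_is_circle g (fun s => Hsmooth 0%nat s) (fun s => Hsmooth 1%nat s)
           Hregular sj Hsj Hshift Hframed Htransversal).
Qed.
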